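(* Fix $\alpha\in(0,1)$. Suppose there exists a solution $(\widehat{U}_*,\widehat{V}_{*})$ of the Taylored control problem $$0=\max_{u\in\mathcal{U}(x)}\Big\{r_u(x)+\alpha\,\mathcal{L}_u V(x)-(1-\alpha)V(x)\Big\},\qquad x\in\mathbb{R}_+^d,$$ (i.e. $\widehat{V}_*$ satisfies the equation and $\widehat{U}_*(x)\in\mathcal{U}(x)$ attains the maximum for every $x$) with $\widehat{V}_{*}\in\mathcal{C}^{2,\beta}(\mathbb{R}_+^d)$ for some $\beta\in(0,1)$. Suppose further that $\mathfrak{j}_{\widehat{U}_*}<\infty$ and $\mathfrak{j}_{U_*}<\infty$, and that $|\widehat{V}_*(x)|\le\Gamma(1+|x|^m)$ for some $m$ and $\Gamma$ (which may depend on $\alpha$). Then for all $x\in\mathbb{Z}_+^d$, $$\Big(|\widehat{V}_{*}(x)-V_{*}^{\alpha}(x)|\vee\big|V_{\widehat{U}_*}^{\alpha}(x)-V_{*}^{\alpha}(x)\big|\Big)\le \big(\mathfrak{j}_{\widehat{U}_*}^{2+\beta}\vee\mathfrak{j}_{U_*}^{2+\beta}\big)\left(\mathbb{E}_x^{\widehat{U}_*}\Big[\sum_{t=0}^{\infty}\alpha^t[D^2\widehat{V}_{*}]^*_{\beta,X_t\pm\mathfrak{j}_{\widehat{U}_*}}\Big]+\mathbb{E}_x^{U_*}\Big[\sum_{t=0}^{\infty}\alpha^t[D^2\widehat{V}_{*}]^*_{\beta,X_t\pm\mathfrak{j}_{U_*}}\Big]\right).$$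
   Context: Controlled Markov chain on $\mathbb{Z}_+^d$: at state $x$ the admissible actions are $\mathcal{U}(x)=\{u\in\mathbb{R}^{m'}:Au\le b(x)\}\cap\mathbb{D}$, with $\mathbb{D}$ a fixed countable discrete set and $b$ defined on $\mathbb{R}_+^d$; under action $u$ at $x$ a reward $r_u(x)$ is collected and the chain moves to $y$ with probability $P^u_{x,y}$. A stationary policy $U$ assigns $U(x)\in\mathcal{U}(x)$ to each state; $\mathbb{E}^U_x$ denotes expectation for the chain $(X_t)$ under $U$ started at $x$. For a policy $U$, $V^\alpha_U(x)=\mathbb{E}^U_x[\sum_{t\ge0}\alpha^t r_{U(X_t)}(X_t)]$; $V^\alpha_*(x)=\max_U V^\alpha_U(x)$ is the optimal value, attained by an optimal stationary policy $U_*$ and satisfying the Bellman equation $V(x)=\max_{u\in\mathcal{U}(x)}\{r_u(x)+\alpha\sum_yP^u_{x,y}V(y)\}$. Drift and second moments: $(\mu_u)_i(x)=\sum_yP^u_{x,y}(y_i-x_i)$, $(\sigma^2_u)_{ij}(x)=\sum_yP^u_{x,y}(y_i-x_i)(y_j-x_j)$; these and $r_u$ are assumed extended to functions of $x\in\mathbb{R}_+^d$ (for $u\in\mathbb{D}$), and $\mathcal{L}_uV(x)=\mu_u(x)'DV(x)+\tfrac12\mathrm{trace}(\sigma^2_u(x)'D^2V(x))$. The restriction of $\widehat U_*$ to $\mathbb{Z}_+^d$ is a stationary policy for the chain. For a stationary policy $U$, $\mathfrak{j}_U$ is the smallest integer (possibly $\infty$) such that $P^{U(x)}_{x,y}=0$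 whenever $|y-x|>\mathfrak{j}_U$. Notation: $|\cdot|$ Euclidean norm; $x\pm\epsilon=\{y\in\mathbb{R}_+^d:|y-x|\le\epsilon\}$; for a (vector- or matrix-valued) $f$ and $\Omega\subseteq\mathbb{R}_+^d$, $[f]^*_{\beta,\Omega}=\sup_{y,z\in\Omega}|f(y)-f(z)|/|y-z|^\beta$; $\mathcal{C}^{2,\beta}$ is the class of twice continuously differentiable functions whose second derivative is $\beta$-Hölder continuous; $D^2$ denotes the Hessian. *)

From HB Require Import structures.
From mathcomp Require Import all_boot all_order all_algebra.
From mathcomp Require Import all_classical all_reals all_analysis.
Set Implicit Arguments. Unset Strict Implicit. Unset Printing Implicit Defensive.
Import Order.TTheory GRing.Theory Num.Theory.
Local Open Scope classical_set_scope.
Local Open Scope ring_scope.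

Section Defs.
Variable R : realType.

Definition enorm (p q : nat) (M : 'M[R]_(p, q)) : R :=
  Num.sqrt (\sum_(i < p) \sum_(j < q) M i j ^+ 2).

Definition orthant (d : nat) : set 'rV[R]_d := [set x | forall i, 0 <= x 0 i].

Definition emb (d : nat) (x : 'rV[nat]_d) : 'rV[R]_d := map_mx (fun n => n%:R) x.

(* x +- eps = { y in R_+^d : |y - x| <= eps } *)
Definition cball (d : nat) (x : 'rV[R]_d) (eps : R) : set 'rV[R]_d :=
  [set y | orthant y /\ enorm (y - x) <= eps].

(* Hölder seminorm [f]^*_{beta,Om}; the supremum of the empty family is 0 *)
Definition holder (d p q : nat) (beta : R) (f : 'rV[R]_d -> 'M[R]_(p, q))
    (Om : set 'rV[R]_d) : \bar R :=
  ereal_sup ([set 0%E] `|`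
    [set v | exists y z, [/\ Om y, Om z, y != z &
       v = ((enorm (f y - f z)) / (enorm (y - z)) `^ beta)%:E]]).

Definition adm (d m k : nat) (Dset : set 'cV[R]_m) (A : 'M[R]_(k, m))
    (b : 'rV[R]_d -> 'cV[R]_k) (x : 'rV[R]_d) : set 'cV[R]_m :=
  [set u | Dset u /\ forall l, (A *m u) l 0 <= b x l 0].

Definition countable_discrete (m : nat) (Dset : set 'cV[R]_m) : Prop :=
  countable Dset /\
  forall u, Dset u -> exists2 e : R, 0 < e & forall v, Dset v -> v != u -> e <= enorm (v - u).

Definition ssum (d : nat) (f : 'rV[nat]_d -> R) : \bar R :=
  (\esum_(y in [set: 'rV[nat]_d]) (Num.max (f y) 0)%:E
   - \esum_(y in [set: 'rV[nat]_d]) (Num.max (- f y) 0)%:E)%E.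

Definition summable_st (d : nat) (f : 'rV[nat]_d -> R) : Prop :=
  (\esum_(y in [set: 'rV[nat]_d]) (`| f y |)%:E < +oo)%E.

(* Kernel type: P u x y = P^u_{x,y} *)
Definition trans_kernel (d m : nat) := 'cV[R]_m -> 'rV[nat]_d -> 'rV[nat]_d -> R.

(* E^U_x [ f(X_t) ] for nonnegative f, computed through the t-step kernel *)
Fixpoint Et (d m : nat) (P : trans_kernel d m) (U : 'rV[nat]_d -> 'cV[R]_m)
    (f : 'rV[nat]_d -> \bar R) (t : nat) : 'rV[nat]_d -> \bar R :=
  match t with
  | 0 => f
  | t'.+1 => fun x => (\esum_(y in [set: 'rV[nat]_d])
                          ((P (U x) x y)%:E * Et P U f t' y))%E
  end.

(* E^U_x [ sum_t alpha^t f(X_t) ] for nonnegative f (Tonelli) *)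
Definition Edisc (d m : nat) (P : trans_kernel d m) (U : 'rV[nat]_d -> 'cV[R]_m)
    (alpha : R) (f : 'rV[nat]_d -> \bar R) (x : 'rV[nat]_d) : \bar R :=
  (\sum_(0 <= t <oo) ((alpha ^+ t)%:E * Et P U f t x))%E.

Definition VU (d m : nat) (P : trans_kernel d m) (r : 'cV[R]_m -> 'rV[R]_d -> R)
    (U : 'rV[nat]_d -> 'cV[R]_m) (alpha : R) (x : 'rV[nat]_d) : \bar R :=
  (Edisc P U alpha (fun y => (Num.max (r (U y) (emb y)) 0)%:E) x
   - Edisc P U alpha (fun y => (Num.max (- r (U y) (emb y)) 0)%:E) x)%E.

Definition policy (d m k : nat) (Dset : set 'cV[R]_m) (A : 'M[R]_(k, m))
    (b : 'rV[R]_d -> 'cV[R]_k) (U : 'rV[nat]_d -> 'cV[R]_m) : Prop :=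
  forall x, adm Dset A b (emb x) (U x).

Definition jbound (d m : nat) (P : trans_kernel d m) (U : 'rV[nat]_d -> 'cV[R]_m) (j : nat) :=
  forall x y, (j%:R < enorm (emb y - emb x)) -> P (U x) x y = 0.

Definition jump_size (d m : nat) (P : trans_kernel d m) (U : 'rV[nat]_d -> 'cV[R]_m) (j : nat) :=
  jbound P U j /\ forall j', jbound P U j' -> (j <= j')%N.

(* Differentiability relative to a set (for C^2 up to the boundary of R_+^d) *)
Definition deriv_within (d p q : nat) (Om : set 'rV[R]_d)
    (f : 'rV[R]_d -> 'M[R]_(p, q)) (x : 'rV[R]_d) (L : 'rV[R]_d -> 'M[R]_(p, q)) :=
  forall e : R, 0 < e -> exists2 del : R, 0 < del & forall y, Om y ->
    enorm (y - x) < del -> enorm (f y - f x - L (y - x)) <= e * enorm (y - x).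

Definition cont_within (d p q : nat) (Om : set 'rV[R]_d)
    (f : 'rV[R]_d -> 'M[R]_(p, q)) (x : 'rV[R]_d) :=
  forall e : R, 0 < e -> exists2 del : R, 0 < del & forall y, Om y ->
    enorm (y - x) < del -> enorm (f y - f x) <= e.

Definition C2beta (d : nat) (beta : R) (V : 'rV[R]_d -> R)
    (DV : 'rV[R]_d -> 'rV[R]_d) (D2V : 'rV[R]_d -> 'M[R]_d) : Prop :=
  (forall x, orthant x ->
     deriv_within (@orthant d) (fun y => (V y)%:M : 'M[R]_1) x
        (fun h => (\sum_i DV x 0 i * h 0 i)%:M)
  /\ deriv_within (@orthant d) DV x (fun h => h *m D2V x)
  /\ cont_within (@orthant d) D2V x)
  /\ forall rad : R, (holder beta D2V [set y | orthant y /\ (enorm y <= rad)%R] < +oo)%E.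

Definition gen (d : nat) (mu : 'rV[R]_d) (sig2 : 'M[R]_d) (DVx : 'rV[R]_d) (D2Vx : 'M[R]_d) : R :=
  \sum_i mu 0 i * DVx 0 i + 2^-1 * \tr (sig2^T *m D2Vx).

End Defs.

(* Taylor's theorem with Hölder remainder bounds the error between one step of the
   chain and the generator: if the jumps of a policy are at most j, then
     |E_y[V(X_1)] - V(y) - L V(y)| <= j^(2+beta) [D^2 V]_(beta, y +- j).
   So the Taylored equation makes Vhat a solution of the discounted Bellman equation
   of Uhat, and a supersolution of that of U_*, up to this one-step error.  Telescoping
   n steps and letting n -> oo (the tail alpha^n E_x[Vhat(X_n)] vanishes since jumps
   are bounded and Vhat grows polynomially) yields |Vhat - V_Uhat| <= X and
   V_* - Vhat <= Y, where X and Y are the discounted error sums along Uhat and U_*.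
   Together with V_Uhat <= V_* this bounds both |Vhat - V_*| and |V_Uhat - V_*| by X + Y. *)

From HB Require Import structures.
From mathcomp Require Import all_boot all_order all_algebra.
From mathcomp Require Import all_classical all_reals all_analysis.
From mathcomp.algebra_tactics Require Import ring lra.
From mathcomp Require Import zify.
Import Order.TTheory GRing.Theory Num.Theory numFieldNormedType.Exports.
Set Implicit Arguments. Unset Strict Implicit. Unset Printing Implicit Defensive.
Local Open Scope classical_set_scope.
Local Open Scope ring_scope.

Section EuclideanNorm.
Variable R : realType.

Lemma sum_CauchySchwarz (I : eqType) (s : seq I) (a b : I -> R) :
  (\sum_(i <- s) a i * b i) ^+ 2 <=
  (\sum_(i <- s) a i ^+ 2) * (\sum_(i <- s) b i ^+ 2).
Proof.
set A := \sum_(i <- s) a i ^+ 2; set B := \sum_(i <- s) a i * b i.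
set C := \sum_(i <- s) b i ^+ 2.
have A0 : 0 <= A by apply: sumr_ge0 => i _; exact: sqr_ge0.
have C0 : 0 <= C by apply: sumr_ge0 => i _; exact: sqr_ge0.
have discr t : 0 <= A * t ^+ 2 + 2 * B * t + C.
  have -> : A * t ^+ 2 + 2 * B * t + C = \sum_(i <- s) (a i * t + b i) ^+ 2.
    rewrite (eq_bigr (fun i => t ^+ 2 * a i ^+ 2 + (2 * t) * (a i * b i) + b i ^+ 2));
      last by move=> i _; ring.
    by rewrite !big_split /= -!mulr_sumr /A /B /C; ring.
  by apply: sumr_ge0 => i _; exact: sqr_ge0.
have [A_eq0|A_neq0] := eqVneq A 0.
  have a0 i : i \in s -> a i = 0.
    move=> si; apply/eqP; rewrite -sqrf_eq0; apply/eqP.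
    move: A_eq0; rewrite /A big_seq => /eqP; rewrite psumr_eq0; last by move=> *; exact: sqr_ge0.
    by move=> /allP /(_ i si) /implyP /(_ si) /eqP.
  have -> : B = 0 by rewrite /B big_seq big1 // => i si; rewrite a0 // mul0r.
  by rewrite expr0n /= mulr_ge0.
have Apos : 0 < A by rewrite lt0r A_neq0 A0.
have := discr (- B / A).
have -> : A * (- B / A) ^+ 2 + 2 * B * (- B / A) + C = C - B ^+ 2 / A by field.
by rewrite subr_ge0 ler_pdivrMr // mulrC.
Qed.

Lemma sum_CauchySchwarz_sqrt (I : eqType) (s : seq I) (a b : I -> R) :
  `|\sum_(i <- s) a i * b i| <=
  Num.sqrt (\sum_(i <- s) a i ^+ 2) * Num.sqrt (\sum_(i <- s) b i ^+ 2).
Proof.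
have A0 : 0 <= \sum_(i <- s) a i ^+ 2 by apply: sumr_ge0 => i _; exact: sqr_ge0.
rewrite -sqrtrM // -sqrtr_sqr ler_sqrt; first exact: sum_CauchySchwarz.
by apply: mulr_ge0 => //; apply: sumr_ge0 => i _; exact: sqr_ge0.
Qed.

Lemma enorm_ge0 p q (M : 'M[R]_(p, q)) : 0 <= enorm M.
Proof. exact: sqrtr_ge0. Qed.

Lemma enorm_rowE q (v : 'rV[R]_q) : enorm v = Num.sqrt (\sum_j v 0 j ^+ 2).
Proof. by rewrite /enorm big_ord1. Qed.

Lemma enorm_mx11 (M : 'M[R]_1) : enorm M = `|M 0 0|.
Proof. by rewrite /enorm !big_ord1 sqrtr_sqr. Qed.

Lemma enorm0 p q : enorm (0 : 'M[R]_(p, q)) = 0.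
Proof.
by rewrite /enorm big1 ?sqrtr0 // => i _; rewrite big1 // => j _; rewrite mxE expr0n.
Qed.

Lemma enormZ p q (c : R) (M : 'M[R]_(p, q)) : enorm (c *: M) = `|c| * enorm M.
Proof.
rewrite /enorm -sqrtr_sqr -sqrtrM ?sqr_ge0 //; congr Num.sqrt.
rewrite mulr_sumr; apply: eq_bigr => i _; rewrite mulr_sumr; apply: eq_bigr => j _.
by rewrite mxE; ring.
Qed.

Lemma coord_le_enorm p q (M : 'M[R]_(p, q)) i j : `|M i j| <= enorm M.
Proof.
rewrite /enorm -sqrtr_sqr ler_sqrt;
  last by apply: sumr_ge0 => *; apply: sumr_ge0 => *; exact: sqr_ge0.
rewrite (bigD1 i) //= (bigD1 j) //= -addrA lerDl.
apply: addr_ge0; first by apply: sumr_ge0 => *; exact: sqr_ge0.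
by apply: sumr_ge0 => *; apply: sumr_ge0 => *; exact: sqr_ge0.
Qed.

Lemma enorm_eq0 p q (M : 'M[R]_(p, q)) : enorm M = 0 -> M = 0.
Proof.
move=> M0; apply/matrixP => i j; rewrite mxE; apply/eqP.
by rewrite -normr_le0 -M0 coord_le_enorm.
Qed.

Lemma enorm_row_CauchySchwarz q (v w : 'rV[R]_q) :
  `|\sum_i v 0 i * w 0 i| <= enorm v * enorm w.
Proof. by rewrite !enorm_rowE; apply: sum_CauchySchwarz_sqrt. Qed.

Lemma quad_form_le q (h : 'rV[R]_q) (C : 'M[R]_q) :
  `|\sum_i \sum_k h 0 k * h 0 i * C k i| <= enorm h ^+ 2 * enorm C.
Proof.
rewrite pair_big /=.
apply: le_trans
  (sum_CauchySchwarz_sqrt _ (fun p => h 0 p.2 * h 0 p.1) (fun p => C p.2 p.1)) _.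
apply: ler_pM; [exact: sqrtr_ge0 | exact: sqrtr_ge0 | | ].
  rewrite (eq_bigr (fun p : 'I_q * 'I_q => h 0 p.2 ^+ 2 * h 0 p.1 ^+ 2)); last by move=> p _; ring.
  rewrite -(pair_big xpredT xpredT (fun i k => h 0 k ^+ 2 * h 0 i ^+ 2)) /=.
  rewrite (eq_bigr (fun i => (\sum_k h 0 k ^+ 2) * h 0 i ^+ 2));
    last by move=> i _; rewrite mulr_suml.
  rewrite -mulr_sumr enorm_rowE -expr2 sqrtr_sqr ger0_norm ?sqr_sqrtr //;
    by apply: sumr_ge0 => *; exact: sqr_ge0.
by rewrite -(pair_big xpredT xpredT (fun i k => C k i ^+ 2)) /= exchange_big.
Qed.

Lemma enorm_row_le_sum q (v : 'rV[R]_q) : (forall i, 0 <= v 0 i) -> enorm v <= \sum_i v 0 i.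
Proof.
move=> v0; have S0 : 0 <= \sum_i v 0 i by apply: sumr_ge0.
rewrite enorm_rowE -(ger0_norm S0) -sqrtr_sqr ler_sqrt; last exact: sqr_ge0.
rewrite expr2 mulr_suml; apply: ler_sum => i _; rewrite expr2.
by apply: ler_wpM2l => //; rewrite (bigD1 i) //= lerDl; exact: sumr_ge0.
Qed.

End EuclideanNorm.

Section MeanValue.
Variable R : realType.

Definition der01 (f : R -> R) (s a : R) :=
  forall e : R, 0 < e -> exists2 del : R, 0 < del & forall s', 0 <= s' <= 1 ->
    `|s' - s| < del -> `|f s' - f s - (s' - s) * a| <= e * `|s' - s|.

Lemma real_induction01 (Q : R -> Prop) :
  Q 0 ->
  (forall c, 0 < c <= 1 -> (forall u, 0 <= u < c -> Q u) -> Q c) ->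
  (forall c, 0 <= c < 1 -> (forall u, 0 <= u <= c -> Q u) ->
     exists2 e : R, 0 < e & forall u, c < u <= 1 -> u < c + e -> Q u) ->
  forall s, 0 <= s <= 1 -> Q s.
Proof.
move=> Q0 Qleft Qright.
pose A := [set t : R | 0 <= t <= 1 /\ forall u, 0 <= u <= t -> Q u].
have A0 : A 0.
  split=> [|u /andP[u0 u1]]; first by rewrite lexx ler01.
  by have -> : u = 0 by apply/eqP; rewrite eq_le u1 u0.
have supA : has_sup A by split; [exists 0 | exists 1 => t [/andP[_ ->]]].
set c := sup A.
have c0 : 0 <= c := sup_upper_bound supA A0.
have c1 : c <= 1 by apply: ge_sup; [exists 0 | move=> t [/andP[_ ->]]].
have below_c u : 0 <= u < c -> Q u.
  case/andP=> u0 uc; have cu : 0 < c - u by rewrite subr_gt0.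
  have [t [_ Qt] ut] := sup_adherent cu supA.
  by apply: Qt; rewrite u0 /=; rewrite -/c in ut; apply: ltW; lra.
have Ac : A c.
  split=> [|u /andP[u0 uc]]; first by rewrite c0 c1.
  have [ult|cu] := ltP u c; first by apply: below_c; rewrite u0.
  have -> : u = c by apply/eqP; rewrite eq_le uc cu.
  have [->|c_neq0] := eqVneq c 0; first exact: Q0.
  by apply: Qleft => //; rewrite lt0r c_neq0 c0.
have c_eq1 : c = 1.
  apply/eqP; rewrite eq_le c1 /= leNgt; apply/negP => clt1.
  have [e e0 Qe] := Qright c ltac:(by rewrite c0 clt1) Ac.2.
  pose t := Num.min (c + e / 2) 1.
  have e2 : 0 < e / 2 by rewrite divr_gt0.
  have At : A t.
    split=> [|u /andP[u0 ut]].
      by rewrite le_min ler01 ge_min lexx orbT !andbT addr_ge0 // ltW.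
    have [uc|cu] := leP u c; first by apply: Ac.2; rewrite u0.
    apply: Qe; first by rewrite cu (le_trans ut) // ge_min lexx orbT.
    have : t <= c + e / 2 by rewrite ge_min lexx.
    lra.
  have := sup_upper_bound supA At; rewrite -/c leNgt => /negP; apply.
  by rewrite lt_min clt1 andbT ltrDl.
by move=> s /andP[s0 s1]; apply: Ac.2; rewrite s0 c_eq1.
Qed.

Lemma der01_dist_le (f : R -> R) (s a M e : R) : der01 f s a -> `|a| <= M -> 0 < e ->
  exists2 del : R, 0 < del & forall u, 0 <= u <= 1 -> `|u - s| < del ->
    `|f u - f s| <= `|u - s| * (M + e).
Proof.
move=> fa aM e0; have [del del0 fa_del] := fa e e0; exists del => // u u01 us.
have := ler_normD (f u - f s - (u - s) * a) ((u - s) * a); rewrite subrK normrM => tri.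
apply: le_trans tri _; rewrite mulrDr.
have : `|u - s| * `|a| <= `|u - s| * M by apply: ler_wpM2l.
move: (fa_del u u01 us); rewrite (mulrC e); lra.
Qed.

Lemma mean_value_ineq01 (f f' : R -> R) (M : R) :
  (forall s, 0 <= s <= 1 -> der01 f s (f' s)) ->
  (forall s, 0 <= s <= 1 -> `|f' s| <= M) ->
  forall s, 0 <= s <= 1 -> `|f s - f 0| <= M * s.
Proof.
move=> df bM.
suff approx e : 0 < e -> forall s, 0 <= s <= 1 -> `|f s - f 0| <= (M + e) * s + e.
  move=> s s01; apply/ler_addgt0Pr => e e0.
  have e2 : 0 < e / 2 by rewrite divr_gt0.
  apply: le_trans (approx _ e2 s s01) _; case/andP: s01 => s0 s1.
  have : e / 2 * s <= e / 2 by rewrite ger_pMr.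
  lra.
move=> e0; apply: real_induction01.
- by rewrite subrr normr0 mulr0 add0r ltW.
- move=> c /andP[c0 c1] Qc; have c01 : 0 <= c <= 1 by rewrite ltW.
  have [del del0 near_c] := der01_dist_le (df c c01) (bM c c01) e0.
  pose u := Num.max (c / 2) (c - del / 2).
  have u0 : 0 <= u by rewrite le_max; apply/orP; left; rewrite divr_ge0 // ltW.
  have uc : u < c by rewrite gt_max; apply/andP; split; lra.
  have cu_del : `|u - c| < del.
    rewrite distrC ger0_norm ?subr_ge0 ?ltW //.
    have : c - del / 2 <= u by rewrite le_max lexx orbT.
    lra.
  have u01 : 0 <= u <= 1 by rewrite u0 /=; apply: le_trans c1; exact: ltW.
  have := near_c u u01 cu_del.
  have cu0 : 0 <= c - u by rewrite subr_ge0 ltW.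
  rewrite distrC (distrC u c) (ger0_norm cu0) => fcu.
  have := Qc u ltac:(by rewrite u0 uc); have := ler_distD (f u) (f c) (f 0).
  have : (M + e) * u + e + (c - u) * (M + e) = (M + e) * c + e by ring.
  lra.
- move=> c /andP[c0 c1] Qc; have c01 : 0 <= c <= 1 by rewrite c0 ltW.
  have [del del0 near_c] := der01_dist_le (df c c01) (bM c c01) e0.
  exists del => // u /andP[cu u1] u_del.
  have u01 : 0 <= u <= 1 by rewrite u1 andbT; apply: le_trans c0 _; exact: ltW.
  have := near_c u u01.
  have uc0 : 0 <= u - c by rewrite subr_ge0 ltW.
  rewrite (ger0_norm uc0) => /(_ ltac:(lra)) fuc.
  have := Qc c ltac:(by rewrite c0 lexx); have := ler_distD (f c) (f u) (f 0).
  have : (M + e) * c + e + (u - c) * (M + e) = (M + e) * u + e by ring.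
  lra.
Qed.

Lemma der01_sub_quadratic (f : R -> R) (s a c0 c1 c2 : R) : der01 f s a ->
  der01 (fun x => f x - (c0 + c1 * x + c2 * x ^+ 2 / 2)) s (a - (c1 + c2 * s)).
Proof.
move=> fa e e0; have e2 : 0 < e / 2 by rewrite divr_gt0.
have c2pos : 0 < `|c2| + 1 by rewrite ltr_pwDr.
have [del del0 fa_del] := fa _ e2.
exists (Num.min del (e / (`|c2| + 1))) => [|s' s'01]; first by rewrite lt_min del0 divr_gt0.
rewrite lt_min => /andP[s'del s'c2].
have -> : f s' - (c0 + c1 * s' + c2 * s' ^+ 2 / 2) - (f s - (c0 + c1 * s + c2 * s ^+ 2 / 2))
    - (s' - s) * (a - (c1 + c2 * s))
    = (f s' - f s - (s' - s) * a) - (c2 * (s' - s)) * (s' - s) / 2 by field.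
apply: le_trans (ler_normB _ _) _.
have c2s : `|c2 * (s' - s)| <= e.
  rewrite normrM; apply: le_trans (_ : `|c2| * (e / (`|c2| + 1)) <= e).
    by apply: ler_wpM2l => //; apply: ltW.
  rewrite mulrA ler_pdivrMr //; have := normr_ge0 c2; nra.
have : `|c2 * (s' - s) * (s' - s) / 2| <= e / 2 * `|s' - s|.
  rewrite 2!normrM (ger0_norm (_ : 0 <= 2^-1)) ?invr_ge0 ?ler0n //.
  have := ler_wpM2r (normr_ge0 (s' - s)) c2s; lra.
move: (fa_del s' s'01 s'del); lra.
Qed.

Lemma der01_scaled (F : R -> R) s a K K2 : 0 <= K -> 0 <= K2 ->
  (forall e, 0 < e -> exists2 del : R, 0 < del & forall s', 0 <= s' <= 1 ->
     `|s' - s| * K < del -> `|F s' - F s - (s' - s) * a| <= e * (`|s' - s| * K2)) ->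
  der01 F s a.
Proof.
move=> K0 K20 hF e e0.
have k2 : 0 < K2 + 1 by rewrite ltr_pwDr.
have k1 : 0 < K + 1 by rewrite ltr_pwDr.
have [del del0 F_del] := hF (e / (K2 + 1)) (divr_gt0 e0 k2).
exists (del / (K + 1)) => [|s' s'01 s'del]; first by rewrite divr_gt0.
have : `|s' - s| * K < del.
  apply: le_lt_trans (_ : `|s' - s| * (K + 1) < del); last by rewrite -ltr_pdivlMr.
  by apply: ler_wpM2l => //; rewrite lerDl.
move=> /(F_del s' s'01) /le_trans; apply.
have -> : e / (K2 + 1) * (`|s' - s| * K2) = (e * `|s' - s|) * (K2 / (K2 + 1)) by ring.
rewrite -{2}(mulr1 (e * `|s' - s|)); apply: ler_wpM2l; first by rewrite mulr_ge0 // ltW.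
by rewrite ler_pdivrMr // mul1r lerDl.
Qed.

End MeanValue.

Section Holder.
Variables (R : realType) (d p q : nat) (f : 'rV[R]_d -> 'M[R]_(p, q)) (beta : R).

Lemma holder_ge0 (Om : set 'rV[R]_d) : (0 <= holder beta f Om)%E.
Proof. by apply: ereal_sup_ubound; left. Qed.

Lemma holder_le (Om : set 'rV[R]_d) (H : R) y z : holder beta f Om = H%:E ->
  Om y -> Om z -> enorm (f y - f z) <= H * enorm (y - z) `^ beta.
Proof.
move=> fH Oy Oz; have H0 : 0 <= H by rewrite -lee_fin -fH holder_ge0.
have [->|y_neq_z] := eqVneq y z; first by rewrite !subrr enorm0 mulr_ge0 ?powR_ge0.
have yz_gt0 : 0 < enorm (y - z).
  rewrite lt0r enorm_ge0 andbT; apply: contra_neq y_neq_z => /enorm_eq0/eqP.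
  by rewrite subr_eq0 => /eqP.
rewrite -ler_pdivrMr ?powR_gt0 // -lee_fin -fH.
by apply: ereal_sup_ubound; right; exists y, z.
Qed.

End Holder.

Section Taylor.
Variables (R : realType) (d : nat).

Definition taylor2 (g : 'rV[R]_d) (H : 'M[R]_d) (h : 'rV[R]_d) : R :=
  \sum_i g 0 i * h 0 i + 2^-1 * \sum_i \sum_k h 0 k * h 0 i * H k i.

Definition segment (x h : 'rV[R]_d) (s : R) := x + s *: h.

Lemma segment_orthant x z s : orthant x -> orthant z -> 0 <= s <= 1 ->
  orthant (segment x (z - x) s).
Proof.
move=> ox oz /andP[s0 s1] i; rewrite /segment !mxE.
have -> : x 0 i + s * (z 0 i - x 0 i) = (1 - s) * x 0 i + s * z 0 i by ring.
by apply: addr_ge0; apply: mulr_ge0; rewrite ?subr_ge0.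
Qed.

Lemma segmentB x h s s' : segment x h s' - segment x h s = (s' - s) *: h.
Proof. by rewrite /segment scalerBl; apply/matrixP => i j; rewrite !mxE; ring. Qed.

Variables (V : 'rV[R]_d -> R) (DV : 'rV[R]_d -> 'rV[R]_d) (D2V : 'rV[R]_d -> 'M[R]_d).
Hypothesis hV : forall x, orthant x -> deriv_within (@orthant R d)
  (fun y => (V y)%:M : 'M[R]_1) x (fun h => (\sum_i DV x 0 i * h 0 i)%:M).
Hypothesis hDV : forall x, orthant x -> deriv_within (@orthant R d) DV x (fun h => h *m D2V x).

Lemma der01_V_segment x z s : orthant x -> orthant z -> 0 <= s <= 1 ->
  der01 (fun s => V (segment x (z - x) s)) s
        (\sum_i DV (segment x (z - x) s) 0 i * (z - x) 0 i).
Proof.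
move=> ox oz s01; set h := z - x.
apply: (der01_scaled (K := enorm h) (K2 := enorm h)); [exact: enorm_ge0 | exact: enorm_ge0 |].
move=> e e0; have [del del0 V_del] := hV (segment_orthant ox oz s01) e0.
exists del => // s' s'01 s'del.
have := V_del _ (segment_orthant ox oz s'01); rewrite segmentB enormZ => /(_ s'del).
rewrite enorm_mx11 !mxE /= !mulr1n.
suff -> : \sum_i DV (segment x h s) 0 i * ((s' - s) *: h) 0 i =
          (s' - s) * \sum_i DV (segment x h s) 0 i * h 0 i by [].
by rewrite mulr_sumr; apply: eq_bigr => i _; rewrite mxE; ring.
Qed.

Lemma der01_DV_segment x z s : orthant x -> orthant z -> 0 <= s <= 1 ->
  der01 (fun s => \sum_i DV (segment x (z - x) s) 0 i * (z - x) 0 i) s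
        (\sum_i \sum_k (z - x) 0 k * (z - x) 0 i * D2V (segment x (z - x) s) k i).
Proof.
move=> ox oz s01; set h := z - x.
apply: (der01_scaled (K := enorm h) (K2 := enorm h * enorm h));
  [exact: enorm_ge0 | by rewrite mulr_ge0 ?enorm_ge0 |].
move=> e e0; have [del del0 DV_del] := hDV (segment_orthant ox oz s01) e0.
exists del => // s' s'01 s'del.
have := DV_del _ (segment_orthant ox oz s'01); rewrite segmentB enormZ => /(_ s'del) DV_le.
set p1 := segment x h s'; set p0 := segment x h s.
have -> : \sum_i DV p1 0 i * h 0 i - \sum_i DV p0 0 i * h 0 i -
    (s' - s) * (\sum_i \sum_k h 0 k * h 0 i * D2V p0 k i) =
    \sum_i (DV p1 - DV p0 - (s' - s) *: h *m D2V p0) 0 i * h 0 i.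
  rewrite mulr_sumr -!sumrB; apply: eq_bigr => i _.
  have -> : (DV p1 - DV p0 - (s' - s) *: h *m D2V p0) 0 i =
      DV p1 0 i - DV p0 0 i - (s' - s) * \sum_k h 0 k * D2V p0 k i.
    by rewrite !mxE mulr_sumr; congr (_ - _); apply: eq_bigr => k _; rewrite !mxE; ring.
  have -> : \sum_k h 0 k * h 0 i * D2V p0 k i = (\sum_k h 0 k * D2V p0 k i) * h 0 i.
    by rewrite mulr_suml; apply: eq_bigr => k _; ring.
  ring.
apply: le_trans (enorm_row_CauchySchwarz _ _) _.
rewrite (_ : e * _ = e * (`|s' - s| * enorm h) * enorm h); last by ring.
by apply: ler_wpM2r; [exact: enorm_ge0 | exact: DV_le].
Qed.

Lemma taylor2_remainder_le (x z : 'rV[R]_d) (beta H : R) :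
  orthant x -> orthant z -> 0 <= beta -> 0 <= H ->
  (forall w, orthant w -> enorm (w - x) <= enorm (z - x) ->
     enorm (D2V w - D2V x) <= H * enorm (w - x) `^ beta) ->
  `|V z - V x - taylor2 (DV x) (D2V x) (z - x)|
    <= H * enorm (z - x) ^+ 2 * enorm (z - x) `^ beta.
Proof.
move=> ox oz b0 H0 D2V_holder; set h := z - x.
set M := H * enorm h ^+ 2 * enorm h `^ beta.
have M0 : 0 <= M by rewrite !mulr_ge0 ?exprn_ge0 ?enorm_ge0 ?powR_ge0.
set L0 := \sum_i DV x 0 i * h 0 i.
set Q0 := \sum_i \sum_k h 0 k * h 0 i * D2V x k i.
have seg0 : segment x h 0 = x by rewrite /segment scale0r addr0.
have seg1 : segment x h 1 = z by rewrite /segment scale1r /h addrC subrK.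
(* [psi] is the first-order remainder of [g], whose derivative is a Hessian increment
   controlled by the Hölder bound; [psi] is in turn the derivative of the second-order
   remainder of [V] along the segment, so the mean value inequality is used twice. *)
pose g s := \sum_i DV (segment x h s) 0 i * h 0 i.
pose psi s := g s - (L0 + Q0 * s + 0 * s ^+ 2 / 2).
pose dpsi s := \sum_i \sum_k h 0 k * h 0 i * D2V (segment x h s) k i - (Q0 + 0 * s).
have dpsi_le s : 0 <= s <= 1 -> `|dpsi s| <= M.
  move=> /andP[s0 s1].
  have -> : dpsi s = \sum_i \sum_k h 0 k * h 0 i * (D2V (segment x h s) - D2V x) k i.
    rewrite /dpsi mul0r addr0 /Q0 -sumrB; apply: eq_bigr => i _.
    by rewrite -sumrB; apply: eq_bigr => k _; rewrite !mxE; ring.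
  apply: le_trans (quad_form_le _ _) _.
  rewrite /M -mulrA mulrCA; apply: ler_wpM2l; first by rewrite exprn_ge0 ?enorm_ge0.
  have seg_dist : enorm (segment x h s - x) = s * enorm h.
    by rewrite -{2}seg0 segmentB subr0 enormZ ger0_norm.
  have h0 := enorm_ge0 h.
  apply: le_trans (D2V_holder _ (segment_orthant ox oz _) _) _; first by rewrite s0.
    by rewrite seg_dist; nra.
  apply: ler_wpM2l => //; rewrite seg_dist.
  by apply: ge0_ler_powR; rewrite ?nnegrE ?mulr_ge0 //; nra.
have psi_le s : 0 <= s <= 1 -> `|psi s| <= M.
  have dpsi_der t : 0 <= t <= 1 -> der01 psi t (dpsi t).
    by move=> t01; exact: der01_sub_quadratic (der01_DV_segment ox oz t01).
  move=> s01; have := mean_value_ineq01 dpsi_der dpsi_le s01.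
  have -> : psi 0 = 0 by rewrite /psi /g seg0 -/L0; ring.
  rewrite subr0 => /le_trans; apply; case/andP: s01 => s0 s1; nra.
have dphi s : 0 <= s <= 1 ->
    der01 (fun s => V (segment x h s) - (V x + L0 * s + Q0 * s ^+ 2 / 2)) s (psi s).
  move=> s01; have -> : psi s = g s - (L0 + Q0 * s) by rewrite /psi; ring.
  exact: der01_sub_quadratic (der01_V_segment ox oz s01).
have := mean_value_ineq01 dphi psi_le (s := 1); rewrite ler01 lexx [M * 1]mulr1 => /(_ isT).
rewrite seg0 seg1 /taylor2 -/L0 -/Q0.
suff -> : V z - (V x + L0 * 1 + Q0 * 1 ^+ 2 / 2) - (V x - (V x + L0 * 0 + Q0 * 0 ^+ 2 / 2))
  = V z - V x - (L0 + 2^-1 * Q0) by [].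
by rewrite expr1n expr0n /=; ring.
Qed.

Lemma taylor2_holder (y z : 'rV[R]_d) (rad beta : R) :
  orthant y -> orthant z -> 0 <= beta -> enorm (z - y) <= rad ->
  ((`|V z - V y - taylor2 (DV y) (D2V y) (z - y)|)%:E
   <= (rad `^ (2 + beta))%:E * holder beta D2V (cball y rad))%E.
Proof.
move=> oy oz b0 zy_rad.
have H0 := holder_ge0 D2V beta (cball y rad).
have [->|z_neq_y] := eqVneq z y.
  have -> : taylor2 (DV y) (D2V y) (y - y) = 0.
    rewrite subrr /taylor2 big1 => [|i _]; last by rewrite mxE mulr0.
    rewrite big1 => [|i _]; last by rewrite big1 // => k _; rewrite !mxE !mul0r.
    by rewrite mulr0 addr0.
  by rewrite subrr subr0 normr0 mule_ge0 // lee_fin powR_ge0.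
have zy_gt0 : 0 < enorm (z - y).
  rewrite lt0r enorm_ge0 andbT; apply: contra_neq z_neq_y => /enorm_eq0/eqP.
  by rewrite subr_eq0 => /eqP.
have rad_gt0 : 0 < rad := lt_le_trans zy_gt0 zy_rad.
case hE : (holder beta D2V (cball y rad)) H0 => [H||] // H0; last first.
  by rewrite gt0_muley ?leey // lte_fin powR_gt0.
rewrite lee_fin in H0; rewrite -EFinM lee_fin.
have y_ball : cball y rad y by split; rewrite // subrr enorm0 ltW.
apply: le_trans (taylor2_remainder_le oy oz b0 H0 _) _.
  move=> w ow wy; apply: holder_le hE _ y_ball.
  by split => //; apply: le_trans zy_rad.
have -> : H * enorm (z - y) ^+ 2 * enorm (z - y) `^ beta = H * enorm (z - y) `^ (2 + beta).
  by rewrite powRD ?(gt_eqF zy_gt0) ?implybT // powR_mulrn ?enorm_ge0 // mulrA.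
rewrite mulrC; apply: ler_wpM2r => //.
by apply: ge0_ler_powR; rewrite ?nnegrE ?enorm_ge0 ?addr_ge0 // ltW.
Qed.

End Taylor.

Section FiniteSupport.
Variable R : realType.

Lemma esum_seq_support (T : choiceType) (s : seq T) (a : T -> \bar R) : uniq s ->
  (forall y, (0 <= a y)%E) -> (forall y, y \notin s -> a y = 0%E) ->
  (\esum_(y in [set: T]) a y)%E = (\sum_(y <- s) a y)%E.
Proof.
move=> s_uniq a0 a_out.
have -> : (\esum_(y in [set: T]) a y)%E = (\esum_(y in [set` s]) a y)%E.
  rewrite [RHS]esum_mkcond; apply: eq_esum => y _.
  case: ifPn => // y_out; apply: a_out; apply/negP => ys; move/negP: y_out; apply.
  by rewrite in_setE.
rewrite esum_fset; [|exact: finite_seq|by move=> *; apply: a0].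
by symmetry; apply: fsbig_seq.
Qed.

Lemma funrposBnegE (T : Type) (f : T -> R) x : f^\+ x - f^\- x = f x.
Proof. by rewrite /funrpos /funrneg; case: (ler0P (f x)) => ?; case: (ler0P (- f x)) => ?; lra. Qed.

Lemma ssum_seq_support d (s : seq 'rV[nat]_d) (f : 'rV[nat]_d -> R) : uniq s ->
  (forall z, z \notin s -> f z = 0) -> ssum f = (\sum_(z <- s) f z)%:E.
Proof.
move=> s_uniq f_out; rewrite /ssum.
rewrite (esum_seq_support (a := fun z => (f^\+ z)%:E) s_uniq); first last.
- by move=> z z_out; rewrite /funrpos f_out // maxxx.
- by move=> z; rewrite lee_fin funrpos_ge0.
rewrite (esum_seq_support (a := fun z => (f^\- z)%:E) s_uniq); first last.
- by move=> z z_out; rewrite /funrneg f_out // oppr0 maxxx.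
- by move=> z; rewrite lee_fin funrneg_ge0.
rewrite !sumEFin -EFinB -sumrB; congr (_%:E); apply: eq_bigr => z _.
exact: funrposBnegE.
Qed.

End FiniteSupport.

Section Box.
Variables (d j : nat).

(* Truncated subtraction clamps coordinates at 0, which only enlarges the box. *)
Definition box (x : 'rV[nat]_d) : seq 'rV[nat]_d :=
  undup [seq \row_i (x 0%R i + k i - j)%N | k : {ffun 'I_d -> 'I_(j + j)%N.+1}
                                         <- enum {ffun 'I_d -> 'I_(j + j)%N.+1}].

Lemma box_uniq (x : 'rV[nat]_d) : uniq (box x). Proof. exact: undup_uniq. Qed.

Lemma mem_box (x y : 'rV[nat]_d) :
  (forall i, y 0%R i <= x 0%R i + j /\ x 0%R i <= y 0%R i + j)%N -> y \in box x.
Proof.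
move=> near_xy; rewrite mem_undup; apply/mapP.
exists [ffun i => inord (y 0 i + j - x 0 i)]; first by rewrite mem_enum.
apply/rowP => i; rewrite mxE ffunE.
move: (near_xy i); set a := y 0 i; set b := x 0 i => -[ya yb].
by rewrite inordK; [apply/eqP|]; lia.
Qed.

Lemma box_coord_le (x y : 'rV[nat]_d) :
  y \in box x -> forall i, (y 0%R i <= x 0%R i + j)%N.
Proof.
rewrite mem_undup => /mapP [k _ ->] i; rewrite mxE.
by have := ltn_ord (k i); set a := x 0 i; set b := nat_of_ord (k i); lia.
Qed.

End Box.

Section BoundedJumpChain.
Variables (R : realType) (d m : nat) (P : trans_kernel R d m).
Variables (U : 'rV[nat]_d -> 'cV[R]_m) (j : nat).
Hypotheses (P0 : forall x y, 0 <= P (U x) x y)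
  (P1 : forall x, (\esum_(y in [set: 'rV[nat]_d]) (P (U x) x y)%:E)%E = 1%E)
  (Pj : jbound P U j).

Lemma coord_close_of_enorm (x y : 'rV[nat]_d) : enorm (emb R y - emb R x) <= j%:R ->
  forall i, (y 0%R i <= x 0%R i + j /\ x 0%R i <= y 0%R i + j)%N.
Proof.
move=> yx_j i; have := le_trans (coord_le_enorm _ 0 i) yx_j.
by rewrite !mxE ler_norml -!(ler_nat R) !natrD => /andP[? ?]; split; lra.
Qed.

Lemma kernel_out_box x y : y \notin box j x -> P (U x) x y = 0.
Proof.
move=> y_out; apply/eqP; apply: contraNT y_out => P_neq0; apply: mem_box.
apply: coord_close_of_enorm; rewrite leNgt; apply/negP => far.
by move: P_neq0; rewrite (Pj far) eqxx.
Qed.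

Lemma sum_kernel_box x : \sum_(y <- box j x) P (U x) x y = 1.
Proof.
have := P1 x; rewrite (esum_seq_support (box_uniq j x)) => [|y|y y_out].
- by rewrite sumEFin => -[].
- by rewrite lee_fin.
- by rewrite kernel_out_box.
Qed.

(* [Et] for real-valued functions, as finite sums over jump boxes (see [Et_Efin]). *)
Fixpoint Efin (t : nat) (g : 'rV[nat]_d -> R) (x : 'rV[nat]_d) : R :=
  if t is t'.+1 then \sum_(y <- box j x) P (U x) x y * Efin t' g y else g x.

Lemma EfinD t g h x : Efin t (fun y => g y + h y) x = Efin t g x + Efin t h x.
Proof.
elim: t x => [//|t IH] x /=; rewrite -big_split /=.
by apply: eq_bigr => y _; rewrite IH mulrDr.
Qed.

Lemma EfinZ t c g x : Efin t (fun y => c * g y) x = c * Efin t g x.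
Proof.
elim: t x => [//|t IH] x /=; rewrite mulr_sumr.
by apply: eq_bigr => y _; rewrite IH mulrCA.
Qed.

Lemma eq_Efin t g h x : (forall y, g y = h y) -> Efin t g x = Efin t h x.
Proof. by move=> gh; rewrite (_ : g = h) //; apply: funext. Qed.

Lemma EfinN t g x : Efin t (fun y => - g y) x = - Efin t g x.
Proof. by rewrite -mulN1r -EfinZ; apply: eq_Efin => y; rewrite mulN1r. Qed.

Lemma EfinB t g h x : Efin t (fun y => g y - h y) x = Efin t g x - Efin t h x.
Proof. by rewrite EfinD EfinN. Qed.

Lemma ler_Efin t g h x : (forall y, g y <= h y) -> Efin t g x <= Efin t h x.
Proof.
move=> gh; elim: t x => [//|t IH] x /=; apply: ler_sum => y _.
exact: ler_wpM2l.
Qed.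

Lemma Efin_cst t c x : Efin t (fun _ => c) x = c.
Proof.
elim: t x => [//|t IH] x /=.
by under eq_bigr do rewrite IH; rewrite -mulr_suml sum_kernel_box mul1r.
Qed.

Lemma Efin_ge0 t g x : (forall y, 0 <= g y) -> 0 <= Efin t g x.
Proof. by move=> g0; rewrite -(Efin_cst t 0 x); apply: ler_Efin. Qed.

Lemma ler_norm_Efin t g x : `|Efin t g x| <= Efin t (fun y => `|g y|) x.
Proof.
elim: t x => [//|t IH] x /=; apply: le_trans (ler_norm_sum _ _ _) _.
by apply: ler_sum => y _; rewrite normrM ger0_norm //; exact: ler_wpM2l.
Qed.

Lemma EfinS t g x : Efin t (Efin 1 g) x = Efin t.+1 g x.
Proof. by elim: t x => [//|t IH] x /=; apply: eq_bigr => y _; rewrite IH. Qed.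

Lemma Efin_le_reach t (g : 'rV[nat]_d -> R) (M : R) (x : 'rV[nat]_d) :
  (forall y : 'rV[nat]_d, (forall i, y 0%R i <= x 0%R i + t * j)%N -> g y <= M) ->
  Efin t g x <= M.
Proof.
elim: t x => [|t IH] x g_le /=; first by apply: g_le => i; rewrite mul0n addn0.
apply: le_trans (_ : \sum_(y <- box j x) P (U x) x y * M <= M).
  rewrite big_seq_cond [X in _ <= X]big_seq_cond; apply: ler_sum => y /andP[y_box _].
  apply: ler_wpM2l => //; apply: IH => z z_reach; apply: g_le => i.
  by have := z_reach i; have := box_coord_le y_box i; lia.
by rewrite -mulr_suml sum_kernel_box mul1r.
Qed.

Lemma Efin_telescope (W : 'rV[nat]_d -> R) (al : R) n x :
  W x = \sum_(t < n) al ^+ t * Efin t (fun y => W y - al * Efin 1 W y) x + al ^+ n * Efin n W x.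
Proof.
elim: n => [|n IH]; first by rewrite big_ord0 add0r expr0 mul1r.
rewrite big_ord_recr /= IH -addrA; congr (_ + _).
have -> : Efin n W x = Efin n (fun y => W y - al * Efin 1 W y) x + al * Efin n.+1 W x.
  by rewrite -EfinS -EfinZ -EfinD; apply: eq_Efin => y; ring.
by rewrite -/(Efin n.+1 W x) exprS; ring.
Qed.

Lemma Et_ge0 (f : 'rV[nat]_d -> \bar R) t x :
  (forall y, (0 <= f y)%E) -> (0 <= Et P U f t x)%E.
Proof.
move=> f0; elim: t x => [//|t IH] x /=.
by apply: esum_ge0 => y _; apply: mule_ge0; rewrite ?lee_fin.
Qed.

Lemma Et_Efin t g x : (forall y, 0 <= g y) -> Et P U (fun y => (g y)%:E) t x = (Efin t g x)%:E.
Proof.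
move=> g0; elim: t x => [//|t IH] x /=; under eq_esum do rewrite IH.
rewrite (esum_seq_support (box_uniq j x)) => [|y|y y_out].
- by rewrite -sumEFin.
- by apply: mule_ge0; rewrite lee_fin // Efin_ge0.
- by rewrite kernel_out_box // mul0e.
Qed.

Lemma Efin_le_Et t (f : 'rV[nat]_d -> \bar R) (g : 'rV[nat]_d -> R) (c : R) x :
  (forall y, (0 <= f y)%E) -> 0 <= c -> (forall y, ((g y)%:E <= c%:E * f y)%E) ->
  ((Efin t g x)%:E <= c%:E * Et P U f t x)%E.
Proof.
move=> f0 c0 gf; elim: t x => [|t IH] x /=; first exact: gf.
rewrite -sumEFin.
apply: (@le_trans _ _ (\sum_(y <- box j x) (P (U x) x y)%:E * (c%:E * Et P U f t y))%E).
  by apply: lee_sum => y _; rewrite EFinM; apply: lee_wpmul2l; rewrite ?lee_fin.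
under eq_bigr do rewrite muleCA.
rewrite -ge0_sume_distrr; last by move=> y _; apply: mule_ge0; rewrite ?lee_fin ?Et_ge0.
apply: lee_wpmul2l; first by rewrite lee_fin.
apply: esum_ge; exists [set` box j x]; first by split; [exact: finite_seq|].
by rewrite fsbig_seq ?box_uniq.
Qed.

End BoundedJumpChain.

Section Series.
Variable R : realType.

Lemma nneseries_fin_cvg (a : nat -> R) : (forall n, 0 <= a n) ->
  (\sum_(0 <= t <oo) (a t)%:E < +oo)%E ->
  exists2 l : R, ((fun n => \sum_(t < n) a t) : R^nat) @ \oo --> l &
    (\sum_(0 <= t <oo) (a t)%:E)%E = l%:E.
Proof.
move=> a0 a_fin; set S := (\sum_(0 <= t <oo) (a t)%:E)%E.
have S_fin : S \is a fin_num.
  by rewrite ge0_fin_numE // nneseries_ge0 // => n _ _; rewrite lee_fin.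
set u := fun n => \sum_(t < n) a t.
have uE n : (u n)%:E = (\sum_(0 <= t < n) (a t)%:E)%E by rewrite /u -sumEFin big_mkord.
have u_cvg : cvgn u.
  apply: nondecreasing_is_cvgn.
    rewrite (_ : u = fun n => \sum_(0 <= k < n | true) a k); last first.
      by apply: funext => n; rewrite /u big_mkord.
    exact: nondecreasing_series.
  exists (fine S) => _ [n _ <-]; rewrite -lee_fin fineK // uE.
  by apply: nneseries_lim_ge => k _ _; rewrite lee_fin.
exists (limn u) => //; rewrite /S -EFin_lim //; congr (limn _).
by apply: funext => n /=; rewrite uE.
Qed.

Lemma bernoulli_ineq (del : R) n : 0 <= del -> 1 + n%:R * del <= (1 + del) ^+ n.
Proof.
move=> del0; elim: n => [|n IH]; first by rewrite mul0r addr0 expr0.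
rewrite exprS; apply: le_trans (_ : (1 + del) * (1 + n%:R * del) <= _).
  have : 0 <= n%:R * del * del by rewrite !mulr_ge0.
  by rewrite -natr1; lra.
by apply: ler_wpM2l => //; rewrite addr_ge0.
Qed.

Lemma natr_expr_bounded (rho : R) : 0 < rho < 1 ->
  exists B : R, forall n, n.+1%:R * rho ^+ n <= B.
Proof.
case/andP => rho0 rho1; set del := rho^-1 - 1.
have del0 : 0 < del by rewrite subr_gt0 invf_gt1.
exists (1 + del^-1) => n.
have rhon0 : 0 < rho ^+ n := exprn_gt0 _ rho0.
have bern : (1 + n%:R * del) * rho ^+ n <= 1.
  have := ler_wpM2r (ltW rhon0) (bernoulli_ineq n (ltW del0)).
  have -> : 1 + del = rho^-1 by rewrite /del addrC subrK.
  by rewrite exprVn mulVf ?gt_eqF.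
have lin : n.+1%:R <= (1 + del^-1) * (1 + n%:R * del).
  have -> : (1 + del^-1) * (1 + n%:R * del) = 1 + del^-1 + n%:R * (del^-1 * del) + n%:R * del.
    by ring.
  have -> : del^-1 * del = 1 by rewrite mulVf // gt_eqF.
  rewrite mulr1 -natr1.
  have : 0 <= n%:R * del by rewrite mulr_ge0 ?ler0n ?ltW.
  have : 0 <= del^-1 by rewrite invr_ge0 ltW.
  lra.
apply: le_trans (_ : (1 + del^-1) * (1 + n%:R * del) * rho ^+ n <= _).
  by apply: ler_wpM2r lin; exact: ltW.
rewrite -mulrA -{2}(mulr1 (1 + del^-1)); apply: ler_wpM2l => //.
by rewrite addr_ge0 // invr_ge0 ltW.
Qed.

Lemma cvg_natr_expr (al : R) (k : nat) : 0 <= al < 1 ->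
  ((fun n => n.+1%:R ^+ k * al ^+ n) : R^nat) @ \oo --> 0.
Proof.
case/andP => al0 al1; set b := Num.max al 2^-1.
have b0 : 0 < b by rewrite lt_max invr_gt0 ltr0n orbT.
have b1 : b < 1 by rewrite gt_max al1 invf_lt1 ?ltr0n // ltr1n.
set rho := b `^ (k.+1%:R)^-1.
have rho0 : 0 < rho by rewrite powR_gt0.
(* [(n + 1)^k al^n <= ((n + 1) rho^n)^k rho^n], and [(n + 1) rho^n] is bounded. *)
have rhoE : rho ^+ k.+1 = b.
  by rewrite /rho -powR_mulrn ?powR_ge0 // -powRrM mulVf ?powRr1 ?pnatr_eq0 // ltW.
have rho1 : rho < 1.
  by rewrite ltNge; apply/negP => /(exprn_ege1 k.+1); rewrite rhoE leNgt b1.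
have [B natr_rho_le] := natr_expr_bounded (ltac:(by rewrite rho0 rho1) : 0 < rho < 1).
have B0 : 0 <= B by apply: le_trans (natr_rho_le 0%N); rewrite mulr_ge0 ?exprn_ge0 ?ltW.
have geo : ((fun n => B ^+ k * rho ^+ n) : R^nat) @ \oo --> 0.
  by rewrite -(mulr0 (B ^+ k)); apply: cvgMl_tmp; apply: cvg_expr; rewrite ger0_norm ?ltW.
apply: (squeeze_cvgr _ (cvg_cst _) geo); apply: nearW => n /=.
have rhon0 : 0 <= rho ^+ n by rewrite exprn_ge0 ?ltW.
rewrite mulr_ge0 ?exprn_ge0 //=.
apply: le_trans (_ : n.+1%:R ^+ k * (rho ^+ n) ^+ k.+1 <= _).
  apply: ler_wpM2l; first exact: exprn_ge0.
  rewrite -exprM mulnC exprM rhoE; apply: lerXn2r.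
  - by rewrite nnegrE.
  - by rewrite nnegrE ltW.
  - by rewrite /b le_max lexx.
rewrite exprS mulrCA -exprMn mulrC; apply: ler_wpM2r => //.
by apply: lerXn2r; rewrite ?nnegrE ?mulr_ge0 // (le_trans _ (natr_rho_le n)).
Qed.

End Series.

Section Reach.
Variables (R : realType) (d j : nat).

Lemma enorm_emb_le_reach (x y : 'rV[nat]_d) n :
  (forall i, y 0%R i <= x 0%R i + n * j)%N ->
  enorm (emb R y) <= (\sum_i ((x 0 i)%:R : R) + d%:R * j%:R) * n.+1%:R.
Proof.
move=> y_reach; apply: le_trans (enorm_row_le_sum _) _ => [i|]; first by rewrite mxE ler0n.
apply: le_trans (_ : \sum_i ((x 0 i)%:R + n%:R * j%:R) <= _).
  by apply: ler_sum => i _; rewrite mxE -natrM -natrD ler_nat.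
rewrite big_split /= sumr_const card_ord -mulr_natr -natr1.
have : 0 <= \sum_i ((x 0 i)%:R : R) by apply: sumr_ge0.
have : 0 <= n%:R * j%:R * d%:R :> R by rewrite !mulr_ge0.
have : 0 <= (n%:R : R) by []. have : 0 <= (j%:R : R) by []. have : 0 <= (d%:R : R) by [].
nra.
Qed.

End Reach.

Section DiscountedValue.
Variables (R : realType) (d m : nat) (P : trans_kernel R d m).
Variables (U : 'rV[nat]_d -> 'cV[R]_m) (j : nat).
Hypotheses (P0 : forall x y, 0 <= P (U x) x y)
  (P1 : forall x, (\esum_(y in [set: 'rV[nat]_d]) (P (U x) x y)%:E)%E = 1%E)
  (Pj : jbound P U j).

Lemma Edisc_ge0 (al : R) (H : 'rV[nat]_d -> \bar R) x : 0 <= al ->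
  (forall y, (0 <= H y)%E) -> (0 <= Edisc P U al H x)%E.
Proof.
move=> al0 H0; apply: nneseries_ge0 => t _ _.
by apply: mule_ge0; [rewrite lee_fin exprn_ge0 | exact: Et_ge0].
Qed.

Lemma Edisc_Efin (al : R) (g : 'rV[nat]_d -> R) x : (forall y, 0 <= g y) ->
  Edisc P U al (fun y => (g y)%:E) x = (\sum_(0 <= t <oo) (al ^+ t * Efin P U j t g x)%:E)%E.
Proof. by move=> g0; apply: eq_eseriesr => t _; rewrite (Et_Efin P0 P1 Pj) // EFinM. Qed.

Lemma Edisc_fin_cvg (al : R) (g h : 'rV[nat]_d -> R) x : 0 <= al ->
  (forall y, 0 <= g y) -> (forall y, g y <= h y) ->
  (Edisc P U al (fun y => (h y)%:E) x < +oo)%E ->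
  exists2 l : R, ((fun n => \sum_(t < n) al ^+ t * Efin P U j t g x) : R^nat) @ \oo --> l &
    Edisc P U al (fun y => (g y)%:E) x = l%:E.
Proof.
move=> al0 g0 gh h_fin; have h0 y : 0 <= h y := le_trans (g0 y) (gh y).
rewrite Edisc_Efin //; apply: nneseries_fin_cvg => [t|].
  by rewrite mulr_ge0 ?exprn_ge0 // (Efin_ge0 P0 P1 Pj).
apply: le_lt_trans h_fin; rewrite Edisc_Efin //.
apply: lee_nneseries => [t _ _|t _].
  by rewrite lee_fin mulr_ge0 ?exprn_ge0 // (Efin_ge0 P0 P1 Pj).
by rewrite lee_fin ler_wpM2l ?exprn_ge0 // (ler_Efin j P0).
Qed.

Lemma VU_cvg (r : 'cV[R]_m -> 'rV[R]_d -> R) (al : R) x : 0 <= al ->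
  (Edisc P U al (fun y => (`|r (U y) (emb R y)|)%:E) x < +oo)%E ->
  exists2 v : R, VU P r U al x = v%:E &
    ((fun n => \sum_(t < n) al ^+ t * Efin P U j t (fun y => r (U y) (emb R y)) x) : R^nat)
      @ \oo --> v.
Proof.
move=> al0 r_fin; set rr := fun y => r (U y) (emb R y).
have pos_le y : rr^\+ y <= `|rr y| by rewrite /funrpos ge_max ler_norm normr_ge0.
have neg_le y : rr^\- y <= `|rr y| by rewrite /funrneg ge_max -normrN ler_norm normr_ge0.
have [lp cvg_p Ep] := Edisc_fin_cvg al0 (funrpos_ge0 rr) pos_le r_fin.
have [ln cvg_n En] := Edisc_fin_cvg al0 (funrneg_ge0 rr) neg_le r_fin.
exists (lp - ln); first by rewrite /VU Ep En EFinB.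
suff -> : (fun n => \sum_(t < n) al ^+ t * Efin P U j t rr x) =
    (fun n => \sum_(t < n) al ^+ t * Efin P U j t rr^\+ x) -
    (fun n => \sum_(t < n) al ^+ t * Efin P U j t rr^\- x) by exact: cvgB.
apply: funext => n; transitivity (\sum_(t < n) al ^+ t * Efin P U j t rr^\+ x -
                                 \sum_(t < n) al ^+ t * Efin P U j t rr^\- x); last by [].
rewrite -sumrB; apply: eq_bigr => t _.
by rewrite -mulrBr -EfinB; congr (_ * _); apply: eq_Efin => y; rewrite funrposBnegE.
Qed.

Lemma discounted_Efin_cvg0 (W : 'rV[nat]_d -> R) (al Gam : R) (k : nat) x : 0 <= al < 1 ->
  (forall y, `|W y| <= Gam * (1 + enorm (emb R y) ^+ k)) ->
  ((fun n => al ^+ n * Efin P U j n W x) : R^nat) @ \oo --> 0.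
Proof.
move=> al01 W_growth; case/andP: (al01) => al0 al1.
set K := \sum_i ((x 0 i)%:R : R) + d%:R * j%:R.
have K0 : 0 <= K by rewrite addr_ge0 ?sumr_ge0 ?mulr_ge0.
have Gam0 : 0 <= Gam.
  have := le_trans (normr_ge0 _) (W_growth x); rewrite pmulr_lge0 //.
  by rewrite ltr_pwDl ?exprn_ge0 ?enorm_ge0.
pose bound n := Gam * al ^+ n + Gam * K ^+ k * (n.+1%:R ^+ k * al ^+ n).
have le_bound n : `|al ^+ n * Efin P U j n W x| <= bound n.
  rewrite normrM ger0_norm ?exprn_ge0 //.
  have -> : bound n = al ^+ n * (Gam * (1 + (K * n.+1%:R) ^+ k)) by rewrite /bound exprMn; ring.
  apply: ler_wpM2l; first exact: exprn_ge0.
  apply: le_trans (ler_norm_Efin j P0 _ _ _) _.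
  apply: (Efin_le_reach P0 P1 Pj) => y y_reach.
  apply: le_trans (W_growth y) _; apply: ler_wpM2l => //; rewrite lerD2l.
  by apply: lerXn2r; rewrite ?nnegrE ?enorm_ge0 ?mulr_ge0 // enorm_emb_le_reach.
have bound_cvg : bound @ \oo --> 0.
  have al_norm : `|al| < 1 by rewrite ger0_norm.
  have := cvgD (cvgMl_tmp (a := Gam) (cvg_expr al_norm))
    (cvgMl_tmp (a := Gam * K ^+ k) (cvg_natr_expr k al01)).
  by rewrite !mulr0 addr0; apply.
have boundN_cvg : (- bound) @ \oo --> 0 by rewrite -oppr0; exact: cvgN.
apply: (squeeze_cvgr _ boundN_cvg bound_cvg); apply: nearW => n.
by have := le_bound n; rewrite ler_norml.
Qed.

Lemma discounted_sum_sub_le (W rr T : 'rV[nat]_d -> R) (al : R) x n :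
  0 <= al <= 1 -> (forall y, rr y - al * T y <= W y - al * Efin P U j 1 W y) ->
  \sum_(t < n) al ^+ t * Efin P U j t rr x - W x + al ^+ n * Efin P U j n W x
    <= \sum_(t < n) al ^+ t * Efin P U j t (fun y => `|T y|) x.
Proof.
case/andP=> al0 al1 rr_le; rewrite [X in _ - X + _](Efin_telescope P U j W al n x).
set e := fun y => W y - al * Efin P U j 1 W y.
suff : \sum_(t < n) al ^+ t * Efin P U j t rr x - \sum_(t < n) al ^+ t * Efin P U j t e x
    <= \sum_(t < n) al ^+ t * Efin P U j t (fun y => `|T y|) x by lra.
rewrite -sumrB; apply: ler_sum => t _; rewrite -mulrBr; apply: ler_wpM2l; first exact: exprn_ge0.
have : Efin P U j t rr x <= Efin P U j t (fun y => e y + `|T y|) x.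
  apply: (ler_Efin j P0) => y; have := rr_le y.
  have : al * T y <= `|T y|.
    by apply: le_trans (ler_norm _) _; rewrite normrM ger0_norm // ler_piMl.
  by rewrite /e; lra.
by rewrite EfinD; lra.
Qed.

Lemma partial_Efin_le_Edisc (T : 'rV[nat]_d -> R) (H : 'rV[nat]_d -> \bar R) (al c : R) x n :
  0 <= al -> 0 <= c -> (forall y, (0 <= H y)%E) ->
  (forall y, ((`|T y|)%:E <= c%:E * H y)%E) ->
  ((\sum_(t < n) al ^+ t * Efin P U j t (fun y => `|T y|) x)%:E <= c%:E * Edisc P U al H x)%E.
Proof.
move=> al0 c0 H0 T_le; rewrite -sumEFin.
have term_ge0 t : (0 <= (al ^+ t)%:E * Et P U H t x)%E.
  by apply: mule_ge0; [rewrite lee_fin exprn_ge0 | exact: Et_ge0].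
apply: (@le_trans _ _ (\sum_(t < n) (al ^+ t)%:E * (c%:E * Et P U H t x))%E).
  apply: lee_sum => t _; rewrite EFinM; apply: lee_wpmul2l; first by rewrite lee_fin exprn_ge0.
  exact: (Efin_le_Et j P0).
under eq_bigr do rewrite muleCA.
rewrite -ge0_sume_distrr; last by move=> t _; exact: term_ge0.
apply: lee_wpmul2l; first by rewrite lee_fin.
rewrite /Edisc -(big_mkord xpredT (fun t => ((al ^+ t)%:E * Et P U H t x)%E)).
by apply: nneseries_lim_ge => t _ _; exact: term_ge0.
Qed.

Lemma verification_le (W rr T : 'rV[nat]_d -> R) (H : 'rV[nat]_d -> \bar R) (al c v : R) x :
  0 <= al <= 1 -> 0 <= c -> (forall y, (0 <= H y)%E) ->
  (forall y, ((`|T y|)%:E <= c%:E * H y)%E) ->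
  (forall y, rr y - al * T y <= W y - al * Efin P U j 1 W y) ->
  ((fun n => al ^+ n * Efin P U j n W x) : R^nat) @ \oo --> 0 ->
  ((fun n => \sum_(t < n) al ^+ t * Efin P U j t rr x) : R^nat) @ \oo --> v ->
  ((v - W x)%:E <= c%:E * Edisc P U al H x)%E.
Proof.
move=> al01 c0 H0 T_le rr_le tail_cvg sum_cvg; case/andP: (al01) => al0 _.
have bound0 : (0 <= c%:E * Edisc P U al H x)%E by rewrite mule_ge0 ?lee_fin ?Edisc_ge0.
case E : (c%:E * Edisc P U al H x)%E bound0 => [B| |] // _; last by rewrite leey.
have u_cvg : ((fun n => \sum_(t < n) al ^+ t * Efin P U j t rr x - W x
                        + al ^+ n * Efin P U j n W x) : R^nat) @ \oo --> v - W x + 0.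
  by apply: cvgD => //; apply: cvgB => //; exact: cvg_cst.
rewrite lee_fin -[v - W x]addr0; apply: (cvgr_to_le u_cvg); apply: nearW => n.
apply: le_trans (discounted_sum_sub_le _ _ al01 rr_le) _.
by rewrite -lee_fin -E partial_Efin_le_Edisc.
Qed.

Lemma verification_dist (W rr T : 'rV[nat]_d -> R) (H : 'rV[nat]_d -> \bar R) (al c v : R) x :
  0 <= al <= 1 -> 0 <= c -> (forall y, (0 <= H y)%E) ->
  (forall y, ((`|T y|)%:E <= c%:E * H y)%E) ->
  (forall y, rr y - al * T y = W y - al * Efin P U j 1 W y) ->
  ((fun n => al ^+ n * Efin P U j n W x) : R^nat) @ \oo --> 0 ->
  ((fun n => \sum_(t < n) al ^+ t * Efin P U j t rr x) : R^nat) @ \oo --> v ->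
  ((`|v - W x|)%:E <= c%:E * Edisc P U al H x)%E.
Proof.
move=> al01 c0 H0 T_le rr_eq tail_cvg sum_cvg; case/andP: (al01) => al0 _.
have rr_le y : rr y - al * T y <= W y - al * Efin P U j 1 W y by rewrite rr_eq.
have le1 := verification_le al01 c0 H0 T_le rr_le tail_cvg sum_cvg.
have le2 : ((W x - v)%:E <= c%:E * Edisc P U al H x)%E.
  rewrite (_ : W x - v = - v - - W x); last by ring.
  apply: (verification_le (W := fun y => - W y) (rr := fun y => - rr y)
                          (T := fun y => - T y)) => //.
  - by move=> y; rewrite normrN.
  - by move=> y; rewrite EfinN; have := rr_eq y; lra.
  - rewrite (_ : (fun n => _) = - (fun n => al ^+ n * Efin P U j n W x)); last first.
      by apply: funext => n /=; rewrite EfinN mulrN.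
    by rewrite -oppr0; exact: cvgN.
  - rewrite (_ : (fun n => _) = - (fun n => \sum_(t < n) al ^+ t * Efin P U j t rr x)).
      exact: cvgN.
    apply: funext => n; transitivity (- \sum_(t < n) al ^+ t * Efin P U j t rr x); last by [].
    by rewrite -sumrN; apply: eq_bigr => t _; rewrite EfinN mulrN.
have bound0 : (0 <= c%:E * Edisc P U al H x)%E by rewrite mule_ge0 ?lee_fin ?Edisc_ge0.
case E : (c%:E * Edisc P U al H x)%E bound0 le1 le2 => [B| |] // _; last by rewrite !leey.
by rewrite !lee_fin ler_norml => le1 le2; apply/andP; split; lra.
Qed.

End DiscountedValue.

Section GeneratorMoments.
Variables (R : realType) (d : nat).

Lemma gen_moments (I : Type) (s : seq I) (p : I -> R) (dz : I -> 'rV[R]_d)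
    (mu g : 'rV[R]_d) (sig H : 'M[R]_d) :
  (forall i, mu 0 i = \sum_(z <- s) p z * dz z 0 i) ->
  (forall i k, sig i k = \sum_(z <- s) p z * (dz z 0 i * dz z 0 k)) ->
  gen mu sig g H = \sum_(z <- s) p z * taylor2 g H (dz z).
Proof.
move=> muE sigE.
have drift : \sum_i mu 0 i * g 0 i = \sum_(z <- s) p z * \sum_i g 0 i * dz z 0 i.
  under eq_bigr do rewrite muE mulr_suml.
  rewrite exchange_big /=; apply: eq_bigr => z _; rewrite mulr_sumr.
  by apply: eq_bigr => i _; ring.
have diffusion : \tr (sig^T *m H) =
    \sum_(z <- s) p z * \sum_i \sum_k dz z 0 k * dz z 0 i * H k i.
  rewrite /mxtrace (eq_bigr (fun i => \sum_k \sum_(z <- s)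
      p z * (dz z 0 k * dz z 0 i) * H k i)); last first.
    by move=> i _; rewrite mxE; apply: eq_bigr => k _; rewrite mxE sigE mulr_suml.
  under eq_bigr do rewrite exchange_big /=.
  rewrite exchange_big /=; apply: eq_bigr => z _; rewrite mulr_sumr; apply: eq_bigr => i _.
  by rewrite mulr_sumr; apply: eq_bigr => k _; ring.
rewrite /gen drift diffusion /taylor2 mulr_sumr -big_split /=.
by apply: eq_bigr => z _; ring.
Qed.

End GeneratorMoments.

Lemma emb_orthant (R : realType) d (z : 'rV[nat]_d) : orthant (emb R z).
Proof. by move=> i; rewrite mxE ler0n. Qed.

Section GeneratorError.
Variables (R : realType) (d m : nat) (P : trans_kernel R d m).
Variables (U : 'rV[nat]_d -> 'cV[R]_m) (j : nat).
Hypotheses (P0 : forall x y, 0 <= P (U x) x y)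
  (P1 : forall x, (\esum_(y in [set: 'rV[nat]_d]) (P (U x) x y)%:E)%E = 1%E)
  (Pj : jbound P U j).
Variables (V : 'rV[R]_d -> R) (DV : 'rV[R]_d -> 'rV[R]_d) (D2V : 'rV[R]_d -> 'M[R]_d).
Hypothesis hV : forall x, orthant x -> deriv_within (@orthant R d)
  (fun y => (V y)%:M : 'M[R]_1) x (fun h => (\sum_i DV x 0 i * h 0 i)%:M).
Hypothesis hDV : forall x, orthant x -> deriv_within (@orthant R d) DV x (fun h => h *m D2V x).
Variables (mu : 'cV[R]_m -> 'rV[R]_d -> 'rV[R]_d) (sig2 : 'cV[R]_m -> 'rV[R]_d -> 'M[R]_d).
Hypothesis hmu : forall y i, (mu (U y) (emb R y) 0 i)%:E =
  ssum (fun z => P (U y) y z * (emb R z 0 i - emb R y 0 i)).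
Hypothesis hsig : forall y i k, (sig2 (U y) (emb R y) i k)%:E =
  ssum (fun z => P (U y) y z * ((emb R z 0 i - emb R y 0 i) * (emb R z 0 k - emb R y 0 k))).

Lemma generator_error_le (beta : R) y : 0 <= beta ->
  ((`|Efin P U j 1 (fun z => V (emb R z)) y - V (emb R y) -
       gen (mu (U y) (emb R y)) (sig2 (U y) (emb R y)) (DV (emb R y)) (D2V (emb R y))|)%:E
   <= (j%:R `^ (2 + beta))%:E * holder beta D2V (cball (emb R y) j%:R))%E.
Proof.
move=> beta0; set S := box j y; set ey := emb R y.
have moment f : ssum (fun z => P (U y) y z * f z) = (\sum_(z <- S) P (U y) y z * f z)%:E.
  by apply: ssum_seq_support (box_uniq j y) _ => z z_out; rewrite (kernel_out_box Pj) // mul0r.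
have genE : gen (mu (U y) ey) (sig2 (U y) ey) (DV ey) (D2V ey) =
    \sum_(z <- S) P (U y) y z * taylor2 (DV ey) (D2V ey) (emb R z - ey).
  apply: gen_moments => [i|i k]; [have := hmu y i | have := hsig y i k];
    by rewrite moment => -[->]; apply: eq_bigr => z _; rewrite !mxE.
have driftE : Efin P U j 1 (fun z => V (emb R z)) y - V ey =
    \sum_(z <- S) P (U y) y z * (V (emb R z) - V ey).
  rewrite /= -[V ey in LHS]mul1r -(sum_kernel_box P0 P1 Pj y) mulr_suml -sumrB.
  by apply: eq_bigr => w _; rewrite mulrBr.
rewrite genE driftE -sumrB.
under eq_bigr do rewrite -mulrBr.
apply: (@le_trans _ _ ((\sum_(z <- S) P (U y) y z *
    `|V (emb R z) - V ey - taylor2 (DV ey) (D2V ey) (emb R z - ey)|)%:E)).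
  rewrite lee_fin; apply: le_trans (ler_norm_sum _ _ _) _.
  by apply: ler_sum => z _; rewrite normrM ger0_norm.
rewrite -sumEFin.
apply: (@le_trans _ _ (\sum_(z <- S) (P (U y) y z)%:E *
    ((j%:R `^ (2 + beta))%:E * holder beta D2V (cball ey j%:R)))%E).
  apply: lee_sum => z _; rewrite EFinM.
  have [->|Pz] := eqVneq (P (U y) y z) 0; first by rewrite !mul0e.
  apply: lee_wpmul2l; first by rewrite lee_fin.
  apply: (taylor2_holder hV hDV (emb_orthant R y) (emb_orthant R z) beta0).
  by rewrite leNgt; apply/negP => far; move: Pz; rewrite (Pj far) eqxx.
rewrite -ge0_sume_distrl; last by move=> z _; rewrite lee_fin.
by rewrite sumEFin (sum_kernel_box P0 P1 Pj) mul1e.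
Qed.

End GeneratorError.

Section PolicyBound.
Variables (R : realType) (d m : nat) (P : trans_kernel R d m).
Variables (U : 'rV[nat]_d -> 'cV[R]_m) (j : nat).
Hypotheses (P0 : forall x y, 0 <= P (U x) x y)
  (P1 : forall x, (\esum_(y in [set: 'rV[nat]_d]) (P (U x) x y)%:E)%E = 1%E)
  (Pj : jbound P U j).
Variables (V : 'rV[R]_d -> R) (DV : 'rV[R]_d -> 'rV[R]_d) (D2V : 'rV[R]_d -> 'M[R]_d).
Hypothesis hV : forall x, orthant x -> deriv_within (@orthant R d)
  (fun y => (V y)%:M : 'M[R]_1) x (fun h => (\sum_i DV x 0 i * h 0 i)%:M).
Hypothesis hDV : forall x, orthant x -> deriv_within (@orthant R d) DV x (fun h => h *m D2V x).
Variables (r : 'cV[R]_m -> 'rV[R]_d -> R).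
Variables (mu : 'cV[R]_m -> 'rV[R]_d -> 'rV[R]_d) (sig2 : 'cV[R]_m -> 'rV[R]_d -> 'M[R]_d).
Hypothesis hmu : forall y i, (mu (U y) (emb R y) 0 i)%:E =
  ssum (fun z => P (U y) y z * (emb R z 0 i - emb R y 0 i)).
Hypothesis hsig : forall y i k, (sig2 (U y) (emb R y) i k)%:E =
  ssum (fun z => P (U y) y z * ((emb R z 0 i - emb R y 0 i) * (emb R z 0 k - emb R y 0 k))).
Variables (al beta c Gam : R) (k : nat).
Hypotheses (al01 : 0 <= al < 1) (beta0 : 0 <= beta) (c_ge : j%:R `^ (2 + beta) <= c)
  (V_growth : forall x, orthant x -> `|V x| <= Gam * (1 + enorm x ^+ k)).

Let W y := V (emb R y).
Let residual y := r (U y) (emb R y) +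
  al * gen (mu (U y) (emb R y)) (sig2 (U y) (emb R y)) (DV (emb R y)) (D2V (emb R y))
  - (1 - al) * V (emb R y).
Let gen_error y := Efin P U j 1 W y - W y -
  gen (mu (U y) (emb R y)) (sig2 (U y) (emb R y)) (DV (emb R y)) (D2V (emb R y)).
Let Hol y := holder beta D2V (cball (emb R y) j%:R).

Let al0 : 0 <= al. Proof. by case/andP: al01. Defined.
Let al01' : 0 <= al <= 1. Proof. by case/andP: al01 => -> /ltW. Defined.
Let c0 : 0 <= c. Proof. exact: le_trans (powR_ge0 _ _) c_ge. Defined.
Let Hol0 y : (0 <= Hol y)%E. Proof. exact: holder_ge0. Defined.

Let gen_error_bound y : ((`|gen_error y|)%:E <= c%:E * Hol y)%E.
Proof.
apply: le_trans (generator_error_le P0 P1 Pj hV hDV hmu hsig y beta0) _.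
by apply: lee_wpmul2r; [exact: Hol0 | rewrite lee_fin].
Defined.

Let residualE y : r (U y) (emb R y) - al * gen_error y = W y - al * Efin P U j 1 W y + residual y.
Proof. by rewrite /gen_error /residual /W; ring. Defined.

Let tail_cvg x : ((fun n => al ^+ n * Efin P U j n W x) : R^nat) @ \oo --> 0.
Proof.
by apply: (discounted_Efin_cvg0 P0 P1 Pj x al01) => y; exact: V_growth (emb_orthant R y).
Defined.

Lemma value_sub_le x : (forall y, residual y <= 0) ->
  (Edisc P U al (fun y => (`|r (U y) (emb R y)|)%:E) x < +oo)%E ->
  exists2 v : R, VU P r U al x = v%:E &
    ((v - V (emb R x))%:E <= c%:E * Edisc P U al Hol x)%E.
Proof.
move=> residual_le r_fin; have [v VE v_cvg] := VU_cvg P0 P1 Pj al0 r_fin.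
exists v => //; apply: (verification_le P0 al01' c0 Hol0 gen_error_bound _ (tail_cvg x) v_cvg).
by move=> y; rewrite residualE; have := residual_le y; lra.
Qed.

Lemma value_dist_le x : (forall y, residual y = 0) ->
  (Edisc P U al (fun y => (`|r (U y) (emb R y)|)%:E) x < +oo)%E ->
  exists2 v : R, VU P r U al x = v%:E &
    ((`|v - V (emb R x)|)%:E <= c%:E * Edisc P U al Hol x)%E.
Proof.
move=> residual_eq r_fin; have [v VE v_cvg] := VU_cvg P0 P1 Pj al0 r_fin.
exists v => //; apply: (verification_dist P0 al01' c0 Hol0 gen_error_bound _ (tail_cvg x) v_cvg).
by move=> y; rewrite residualE residual_eq addr0.
Qed.

End PolicyBound.

Lemma maxe_dist_le (R : realType) (v vh vs : R) (X Y : \bar R) :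
  (0 <= Y)%E -> ((`|vh - v|)%:E <= X)%E -> ((vs - v)%:E <= Y)%E -> vh <= vs ->
  (maxe `|(v - vs)%:E| `|(vh - vs)%:E| <= X + Y)%E.
Proof.
move=> Y0 hX hY vh_vs; have X0 : (0 <= X)%E by apply: le_trans hX; rewrite lee_fin.
case: X X0 hX => [X| |] // X0 hX; last first.
  by rewrite addye ?leey // -ltNye (lt_le_trans (ltNyr 0) Y0).
case: Y Y0 hY => [Y| |] // Y0 hY; last by rewrite addey ?leey.
rewrite -EFinD !abse_EFin ge_max !lee_fin ler_norml in X0 Y0 hX hY *.
by case/andP: hX => ? ?; rewrite !ler_norml; apply/andP; split; apply/andP; split; lra.
Qed.

Unset Implicit Arguments.
Theorem theorem1 (R : realType) (d m k : nat)
  (Dset : set 'cV[R]_m) (A : 'M[R]_(k, m)) (b : 'rV[R]_d -> 'cV[R]_k)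
  (r : 'cV[R]_m -> 'rV[R]_d -> R)
  (mu : 'cV[R]_m -> 'rV[R]_d -> 'rV[R]_d)
  (sig2 : 'cV[R]_m -> 'rV[R]_d -> 'M[R]_d)
  (P : trans_kernel R d m) (alpha : R)
  (Ustar : 'rV[nat]_d -> 'cV[R]_m)
  (Uhat : 'rV[R]_d -> 'cV[R]_m) (Vhat : 'rV[R]_d -> R)
  (DV : 'rV[R]_d -> 'rV[R]_d) (D2V : 'rV[R]_d -> 'M[R]_d)
  (beta : R) (jh js : nat) :
  (* standing assumptions on the controlled chain *)
  countable_discrete Dset ->
  (forall x u, adm Dset A b (emb R x) u ->
     (forall y, 0 <= P u x y) /\ (\esum_(y in [set: 'rV[nat]_d]) (P u x y)%:E)%E = 1%E) ->
  (forall x u i, adm Dset A b (emb R x) u ->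
     summable_st (fun y => P u x y * (emb R y 0 i - emb R x 0 i)) /\
     (mu u (emb R x) 0 i)%:E = ssum (fun y => P u x y * (emb R y 0 i - emb R x 0 i))) ->
  (forall x u i j, adm Dset A b (emb R x) u ->
     summable_st (fun y => P u x y * ((emb R y 0 i - emb R x 0 i) * (emb R y 0 j - emb R x 0 j))) /\
     (sig2 u (emb R x) i j)%:E =
       ssum (fun y => P u x y * ((emb R y 0 i - emb R x 0 i) * (emb R y 0 j - emb R x 0 j)))) ->
  0 < alpha < 1 ->
  (* V^alpha_U is well defined (finite) for every stationary policy *)
  (forall U, policy Dset A b U -> forall x,
     (Edisc P U alpha (fun y => (`| r (U y) (emb R y) |)%:E) x < +oo)%E) ->
  (* U_* is an optimal stationary policy, V_* := V^alpha_{U_*} satisfies Bellman *)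
  policy Dset A b Ustar ->
  (forall U, policy Dset A b U -> forall x, (VU P r U alpha x <= VU P r Ustar alpha x)%E) ->
  (forall x u, adm Dset A b (emb R x) u ->
     ((r u (emb R x))%:E + alpha%:E * ssum (fun y => (P u x y * fine (VU P r Ustar alpha y))%R)
        <= VU P r Ustar alpha x)%E) ->
  (* (Uhat, Vhat) solves the Taylored control problem *)
  0 < beta < 1 ->
  C2beta beta Vhat DV D2V ->
  (forall x, orthant x ->
     [/\ adm Dset A b x (Uhat x),
         r (Uhat x) x + alpha * gen (mu (Uhat x) x) (sig2 (Uhat x) x) (DV x) (D2V x)
           - (1 - alpha) * Vhat x = 0
       & forall u, adm Dset A b x u ->
         r u x + alpha * gen (mu u x) (sig2 u x) (DV x) (D2V x) - (1 - alpha) * Vhat x <= 0]) ->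
  (* finite jump sizes *)
  jump_size P (fun x => Uhat (emb R x)) jh ->
  jump_size P Ustar js ->
  (* polynomial growth *)
  (exists (mexp : nat) (Gam : R), forall x, orthant x ->
     `| Vhat x | <= Gam * (1 + enorm x ^+ mexp)) ->
  forall x : 'rV[nat]_d,
    (maxe `| (Vhat (emb R x))%:E - VU P r Ustar alpha x |
          `| VU P r (fun y => Uhat (emb R y)) alpha x - VU P r Ustar alpha x |
     <= (Num.max (jh%:R `^ (2 + beta)) (js%:R `^ (2 + beta)))%:E *
        (Edisc P (fun y => Uhat (emb R y)) alpha
           (fun y => holder beta D2V (cball (emb R y) jh%:R)) x
         + Edisc P Ustar alpha
           (fun y => holder beta D2V (cball (emb R y) js%:R)) x))%E.
Proof.
move=> _ hP hmu hsig /andP[al0 al1] r_fin pol_s opt_s _ /andP[beta0 _] [hder _] hHJB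
  [jh_bound _] [js_bound _] [mexp [Gam V_growth]] x.
have hV y oy := (hder y oy).1; have hDV y oy := (hder y oy).2.1.
set Uh := fun y => Uhat (emb R y).
have pol_h : policy Dset A b Uh by move=> y; case: (hHJB _ (emb_orthant R y)).
have al01 : 0 <= alpha < 1 by rewrite (ltW al0) al1.
set c := Num.max _ _.
have c_h : jh%:R `^ (2 + beta) <= c by rewrite /c le_max lexx.
have c_s : js%:R `^ (2 + beta) <= c by rewrite /c le_max lexx orbT.
have kernel_h y := hP y _ (pol_h y); have kernel_s y := hP y _ (pol_s y).
have [vh VhE dist_h] := value_dist_le (fun y => (kernel_h y).1) (fun y => (kernel_h y).2)
  jh_bound hV hDV (fun y i => (hmu y _ i (pol_h y)).2) (fun y i l => (hsig y _ i l (pol_h y)).2)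
  al01 (ltW beta0) c_h V_growth
  (fun y => let: And3 _ hjb _ := hHJB _ (emb_orthant R y) in hjb) (r_fin _ pol_h x).
have [vs VsE sub_s] := value_sub_le (fun y => (kernel_s y).1) (fun y => (kernel_s y).2)
  js_bound hV hDV (fun y i => (hmu y _ i (pol_s y)).2) (fun y i l => (hsig y _ i l (pol_s y)).2)
  al01 (ltW beta0) c_s V_growth
  (fun y => let: And3 _ _ hjb := hHJB _ (emb_orthant R y) in hjb _ (pol_s y)) (r_fin _ pol_s x).
have vh_vs : vh <= vs by rewrite -lee_fin -VhE -VsE; exact: opt_s.
have Edisc_s0 :
    (0 <= Edisc P Ustar alpha (fun y => holder beta D2V (cball (emb R y) js%:R)) x)%E.
  by apply: (Edisc_ge0 (fun y => (kernel_s y).1) x (ltW al0)) => y; exact: holder_ge0.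
rewrite VhE VsE ge0_muleDr //; last first.
  by apply: (Edisc_ge0 (fun y => (kernel_h y).1) x (ltW al0)) => y; exact: holder_ge0.
by apply: maxe_dist_le => //; rewrite mule_ge0 // lee_fin (le_trans (powR_ge0 _ _) c_s).
Qed.
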